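(* Let $\tilde{\mathfrak g}$ be a real Lie algebra with a metric $\langle,\rangle$ and a pseudo-Iwasawa decomposition $\tilde{\mathfrak g}=\mathfrak g\oplus^\perp\mathfrak a$. Let $H\in\tilde{\mathfrak g}$ be defined by $\langle H,v\rangle=\operatorname{Tr}(\operatorname{ad}v)$ for all $v\in\tilde{\mathfrak g}$, let $\widetilde{\operatorname{ric}}$ be the Ricci tensor of $\tilde{\mathfrak g}$ and $\operatorname{ric}$ that of $\mathfrak g$ with the restricted metric. Then $\widetilde{\operatorname{ric}}(v,w)=\operatorname{ric}(v,w)-\langle[H,v],w\rangle$ for $v,w\in\mathfrak g$; $\widetilde{\operatorname{ric}}(v,X)=0$ for $v\in\mathfrak g$, $X\in\mathfrak a$; $\widetilde{\operatorname{ric}}(X,Y)=-\operatorname{Tr}(\operatorname{ad}X\circ\operatorname{ad}Y)$ for $X,Y\in\mathfrak a$.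
   Context: A metric on a Lie algebra is a nondegenerate symmetric bilinear form, possibly indefinite; the Ricci tensor is that of the corresponding left-invariant pseudo-Riemannian metric on the simply connected Lie group. A pseudo-Iwasawa decomposition of a metric Lie algebra $\tilde{\mathfrak g}$ is an orthogonal direct sum of vector spaces $\tilde{\mathfrak g}=\mathfrak g\oplus^\perp\mathfrak a$ with $\mathfrak g$ a nilpotent ideal, $\mathfrak a$ an abelian subalgebra, and $\operatorname{ad}X$ self-adjoint for every $X\in\mathfrak a$. *)

From HB Require Import structures.
From mathcomp Require Import all_boot all_order all_algebra.
From mathcomp Require Import reals.
Set Implicit Arguments. Unset Strict Implicit. Unset Printing Implicit Defensive.
Import Order.TTheory GRing.Theory Num.Theory.
Local Open Scope ring_scope.

Section MetricLie.
Variables (R : fieldType) (V : vectType R).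

(* trace of an (assumed linear) endomorphism, computed in the basis vbasis fullv *)
Definition vtrace (f : V -> V) : R :=
  \sum_(i < \dim {:V}) coord (vbasis fullv) i (f (tnth (vbasis fullv) i)).

Definition is_lie_bracket (br : V -> V -> V) : Prop :=
  [/\ (forall (a : R) x y z, br (a *: x + y) z = a *: br x z + br y z),
      (forall (a : R) x y z, br x (a *: y + z) = a *: br x y + br x z),
      (forall x, br x x = 0) &
      (forall x y z, br x (br y z) + br y (br z x) + br z (br x y) = 0)].

Definition is_metric (met : V -> V -> R) : Prop :=
  [/\ (forall (a : R) x y z, met (a *: x + y) z = a * met x z + met y z),
      (forall x y, met x y = met y x) &
      (forall x, (forall y, met x y = 0) -> x = 0)].

Variables (br : V -> V -> V) (met : V -> V -> R).

(* right-hand side of the Koszul formula: <nabla_x y, z> = koszul x y z *)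
Definition koszul (x y z : V) : R :=
  (met (br x y) z - met (br y z) x + met (br z x) y) / 2%:R.

Definition gram : 'M[R]_(\dim {:V}) :=
  \matrix_(i, j) met (tnth (vbasis fullv) i) (tnth (vbasis fullv) j).

(* Levi-Civita connection: nabla x y is the unique vector w with
   met w z = koszul x y z for all z (solved through the Gram matrix). *)
Definition nabla (x y : V) : V :=
  let c := (\row_j koszul x y (tnth (vbasis fullv) j)) *m invmx gram in
  \sum_(i < \dim {:V}) c 0 i *: tnth (vbasis fullv) i.

Definition curv (x y z : V) : V :=
  nabla x (nabla y z) - nabla y (nabla x z) - nabla (br x y) z.

Definition ricci (x y : V) : R := vtrace (fun z => curv z x y).

(* restriction of bracket and metric to a subspace U (the bracket is
   projected back into U; for a subalgebra this is the restricted bracket) *)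
Definition br_sub (U : {vspace V}) (u v : subvs_of U) : subvs_of U :=
  vsproj U (br (vsval u) (vsval v)).
Definition met_sub (U : {vspace V}) (u v : subvs_of U) : R :=
  met (vsval u) (vsval v).

(* U is nilpotent: all right-normed brackets [x1,[x2,...,[xk,y]]] with
   k entries from U (and y in U) vanish, i.e. the lower central series ends *)
Definition nilpotent_sub (U : {vspace V}) : Prop :=
  exists k : nat, forall (xs : seq V) (y : V), size xs = k ->
    all (fun x => x \in U) xs -> y \in U -> foldr br y xs = 0.

Definition ideal_sub (U : {vspace V}) : Prop :=
  forall x y, x \in U -> br y x \in U.

Definition pseudo_iwasawa (g a : {vspace V}) : Prop :=
  [/\ (g + a)%VS = fullv /\ (g :&: a)%VS = 0%VS,
      (forall x y, x \in g -> y \in a -> met x y = 0),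
      ideal_sub g /\ nilpotent_sub g,
      (forall X Y, X \in a -> Y \in a -> br X Y = 0) &
      (forall X u v, X \in a -> met (br X u) v = met u (br X v))].

End MetricLie.

Arguments br_sub {R V} br U u v.
Arguments met_sub {R V} met U u v.

From HB Require Import structures.
From mathcomp Require Import all_boot all_order all_algebra.
From mathcomp Require Import reals ring.
Set Implicit Arguments. Unset Strict Implicit. Unset Printing Implicit Defensive.
Import GRing.Theory Num.Theory.
Local Open Scope ring_scope.

(* Since [ad X] is self-adjoint for X in a and [g~, g~] lies in g, which is
   orthogonal to a, the Koszul formula gives nabla_X = 0 and nabla_u X = [u, X]
   for X in a; hence R(., X) Y = - ad X ad Y, the third formula.  For v in g and
   X in a, Tr R(., v) X is a sum of three traces that vanish: Tr (nabla_. y) =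
   - Tr (ad y) = 0 for y in the nilpotent ideal g, nabla_v is skew while ad X is
   self-adjoint, and ad X ad v is nilpotent.  For v, w in g we split the trace
   along g + a: the g-component of nabla is the Levi-Civita connection of g, and
   of the correction terms coming from the a-component of nabla only
   Tr_g (u |-> [u, Y]) = - <H, Y> survives, with Y the a-component of nabla_v w;
   as H lies in a (it is orthogonal to g because Tr (ad v) = 0 for v in g),
   <H, Y> = <H, nabla_v w> = <[H, v], w>. *)

Section LinearFor.
Variables (R : pzRingType) (U : lmodType R) (V : zmodType) (s : GRing.Scale.law R V).
Variable f : U -> V.
Hypothesis f_lin : linear_for s f.

Let F : {linear U -> V | s} := HB.pack f (GRing.isLinear.Build R U V s f f_lin).

Lemma linear_for0 : f 0 = 0. Proof. exact: linear0 F. Qed.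
Lemma linear_forD : {morph f : x y / x + y}. Proof. exact: linearD F. Qed.
Lemma linear_forN : {morph f : x / - x}. Proof. exact: linearN F. Qed.
Lemma linear_forB : {morph f : x y / x - y}. Proof. exact: linearB F. Qed.
Lemma linear_forZ : scalable_for s f. Proof. exact: linearZ_LR F. Qed.
Lemma linear_for_sum I r (P : pred I) E :
  f (\sum_(i <- r | P i) E i) = \sum_(i <- r | P i) f (E i).
Proof. exact: (linear_sum F r P E). Qed.

End LinearFor.

Lemma scalar_forZ (R : pzRingType) (U : lmodType R) (h : U -> R) :
  scalar h -> forall a x, h (a *: x) = a * h x.
Proof. exact: linear_forZ. Qed.

Lemma linear_comp (R : pzRingType) (U V : lmodType R) (W : zmodType)
    (s : GRing.Scale.law R W) (f : V -> W) (h : U -> V) :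
  linear_for s f -> linear h -> linear_for s (fun x => f (h x)).
Proof. by move=> f_lin h_lin a x y; rewrite h_lin f_lin. Qed.

Lemma linear_funB (R : pzRingType) (U V : lmodType R) (f h : U -> V) :
  linear f -> linear h -> linear (fun x => f x - h x).
Proof. by move=> f_lin h_lin c x y; rewrite f_lin h_lin scalerBr opprD addrACA. Qed.

Lemma vbasis_tnth_mem (K : fieldType) (W : vectType K) (U : {vspace W}) i :
  tnth (vbasis U) i \in U.
Proof. exact/vbasis_mem/mem_tnth. Qed.

Lemma coord_vbasis_tnth (K : fieldType) (W : vectType K) (U : {vspace W}) x :
  x \in U -> x = \sum_i coord (vbasis U) i x *: tnth (vbasis U) i.
Proof. by move/coord_vbasis=> {1}->; apply: eq_bigr => i _; rewrite (tnth_nth 0). Qed.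

Section Trace.
Variables (K : fieldType) (W : vectType K).
Implicit Types (U : {vspace W}) (f h : W -> W).

(* The trace of [f] compressed to [U]: only meaningful when [f] maps [U] into itself. *)
Definition trace_on U f : K :=
  \sum_(i < \dim U) coord (vbasis U) i (f (tnth (vbasis U) i)).

Lemma eq_trace_on U f h : {in U, f =1 h} -> trace_on U f = trace_on U h.
Proof. by move=> fh; apply: eq_bigr => i _; rewrite fh ?vbasis_tnth_mem. Qed.

Lemma trace_onD U f h : trace_on U (fun x => f x + h x) = trace_on U f + trace_on U h.
Proof. by rewrite -big_split; apply: eq_bigr => i _; rewrite linearD. Qed.

Lemma trace_onN U f : trace_on U (fun x => - f x) = - trace_on U f.
Proof. by rewrite -sumrN; apply: eq_bigr => i _; rewrite linearN. Qed.

Lemma trace_onB U f h : trace_on U (fun x => f x - h x) = trace_on U f - trace_on U h.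
Proof. by rewrite -sumrB; apply: eq_bigr => i _; rewrite linearB. Qed.

Lemma trace_on_finite_rank U f n (phi : 'I_n -> W -> K) (u : 'I_n -> W) :
  (forall k, scalar (phi k)) -> (forall k, u k \in U) ->
  {in U, forall x, f x = \sum_k phi k x *: u k} ->
  trace_on U f = \sum_k phi k (u k).
Proof.
move=> phi_scalar uU f_exp; rewrite /trace_on.
under eq_bigr => i _ do rewrite (f_exp _ (vbasis_tnth_mem i)) linear_sum.
rewrite exchange_big; apply: eq_bigr => k _ /=.
rewrite [in RHS](coord_vbasis_tnth (uU k)) (linear_for_sum (phi_scalar k)).
by apply: eq_bigr => i _; rewrite linearZ (scalar_forZ (phi_scalar k)) /= mulrC.
Qed.

Lemma trace_on_nilpotent N U f : linear f -> {in U, forall x, f x \in U} ->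
  {in U, forall x, iter N f x = 0} -> trace_on U f = 0.
Proof.
move=> f_lin; elim: N U => [|N IHN] U fU fN.
  rewrite /trace_on big1 // => i _; have /= -> := fN _ (vbasis_tnth_mem i).
  by rewrite (linear_for0 f_lin) linear0.
(* Pass to the image f(U): f has the same trace there and is nilpotent of index N. *)
pose fU' := span (map_tuple f (vbasis U)).
have fU'_mem x : x \in U -> f x \in fU'.
  move/coord_vbasis_tnth=> ->; rewrite (linear_for_sum f_lin); apply: memv_suml => i _.
  by rewrite (linear_forZ f_lin) memvZ // memv_span // -tnth_map mem_tnth.
have fU'_img x : x \in fU' -> exists2 y, y \in U & x = f y.
  move/coord_span=> ->.
  exists (\sum_i coord (map_tuple f (vbasis U)) i x *: tnth (vbasis U) i).
    by apply: memv_suml => i _; rewrite memvZ // vbasis_tnth_mem.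
  rewrite (linear_for_sum f_lin); apply: eq_bigr => i _.
  by rewrite (linear_forZ f_lin) -tnth_map (tnth_nth 0).
have -> : trace_on U f = trace_on fU' f.
  rewrite (@trace_on_finite_rank U f _ (fun k x => coord (vbasis fU') k (f x))
    (tnth (vbasis fU'))) //.
  - by move=> k a x y; rewrite f_lin linearP.
  - move=> k; apply: subvP (vbasis_tnth_mem k); apply/span_subvP.
    by move=> _ /mapP [y /vbasis_mem yU ->]; apply: fU.
  - by move=> x /fU'_mem /coord_vbasis_tnth.
apply: IHN => x /fU'_img [y yU ->]; first exact/fU'_mem/fU.
by rewrite -iterSr fN.
Qed.

Lemma eq_vtrace f h : f =1 h -> vtrace f = vtrace h.
Proof. by move=> fh; apply: eq_trace_on => x _. Qed.

Lemma vtraceD f h : vtrace (fun x => f x + h x) = vtrace f + vtrace h.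
Proof. exact: trace_onD. Qed.

Lemma vtraceB f h : vtrace (fun x => f x - h x) = vtrace f - vtrace h.
Proof. exact: trace_onB. Qed.

Lemma vtraceN f : vtrace (fun x => - f x) = - vtrace f.
Proof. exact: trace_onN. Qed.

Lemma vtrace_finite_rank f n (phi : 'I_n -> W -> K) (u : 'I_n -> W) :
  (forall k, scalar (phi k)) -> (forall x, f x = \sum_k phi k x *: u k) ->
  vtrace f = \sum_k phi k (u k).
Proof. by move=> phi_scalar f_exp; apply: trace_on_finite_rank => // *; apply: memvf. Qed.

Lemma vtrace_compC f h : linear f -> linear h ->
  vtrace (fun x => f (h x)) = vtrace (fun x => h (f x)).
Proof.
move=> f_lin h_lin.
rewrite (@vtrace_finite_rank _ _ (fun i x => coord (vbasis fullv) i (h x))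
  (fun i => f (tnth (vbasis fullv) i))) //.
- by move=> i a x y; rewrite h_lin linearP.
- move=> x; rewrite {1}(coord_vbasis_tnth (memvf (h x))) (linear_for_sum f_lin).
  by apply: eq_bigr => i _; rewrite (linear_forZ f_lin).
Qed.

Lemma vtrace_nilpotent N f : linear f -> (forall x, iter N f x = 0) -> vtrace f = 0.
Proof. by move=> f_lin fN; apply: (trace_on_nilpotent f_lin) => x *; rewrite ?memvf ?fN. Qed.

Lemma vtrace_daddv U U' f : linear f -> (U :&: U' = 0)%VS -> (U + U' = fullv)%VS ->
  vtrace f = trace_on U (fun x => daddv_pi U U' (f x))
           + trace_on U' (fun x => daddv_pi U' U (f x)).
Proof.
move=> f_lin UU'0 UU'full.
have trace_pi U1 U2 : vtrace (fun x => f (daddv_pi U1 U2 x))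
                      = trace_on U1 (fun x => daddv_pi U1 U2 (f x)).
  rewrite (@vtrace_finite_rank _ _ (fun i x => coord (vbasis U1) i (daddv_pi U1 U2 x))
    (fun i => f (tnth (vbasis U1) i))) //.
  - by move=> i a x y; rewrite !linearP.
  - move=> x; rewrite {1}(coord_vbasis_tnth (memv_pi U1 U2 x)) (linear_for_sum f_lin).
    by apply: eq_bigr => i _; rewrite (linear_forZ f_lin).
rewrite -!trace_pi -vtraceD; apply: eq_vtrace => x.
by rewrite -(linear_forD f_lin) daddv_pi_add // UU'full memvf.
Qed.

Lemma vtrace_subvs U (F : subvs_of U -> subvs_of U) : linear F ->
  vtrace F = trace_on U (fun x => vsval (F (vsproj U x))).
Proof.
move=> F_lin.
rewrite (@trace_on_finite_rank U _ _ (fun j x => coord (vbasis fullv) j (F (vsproj U x)))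
  (fun j => vsval (tnth (vbasis fullv) j))).
- by apply: eq_bigr => j _; rewrite vsvalK.
- by move=> j a x y; rewrite linearP /= F_lin linearP.
- by move=> j; apply: subvsP.
- move=> x _; rewrite {1}(coord_vbasis_tnth (memvf (F (vsproj U x)))) linear_sum.
  by apply: eq_bigr => j _; rewrite linearZ.
Qed.

End Trace.

Section LieBracket.
Variables (K : fieldType) (V : vectType K) (br : V -> V -> V).
Hypothesis br_lie : is_lie_bracket br.

Lemma lie_linearl z : linear (br^~ z).
Proof. by case: br_lie => brl _ _ _ a x y; apply: brl. Qed.

Lemma lie_linearr z : linear (br z).
Proof. by case: br_lie => _ brr _ _ a x y; apply: brr. Qed.

Lemma lie_anticomm x y : br x y = - br y x.
Proof.
case: br_lie => _ _ br_alt _; apply/eqP; rewrite -addr_eq0.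
have := br_alt (x + y).
by rewrite (linear_forD (lie_linearl _)) !(linear_forD (lie_linearr _)) !br_alt add0r addr0 => ->.
Qed.

Lemma lie_jacobi x y z : br x (br y z) + br y (br z x) + br z (br x y) = 0.
Proof. by case: br_lie. Qed.

Lemma lie_derivation X y x : br X (br y x) = br (br X y) x + br y (br X x).
Proof.
have := lie_jacobi X y x; rewrite (lie_anticomm x X) (lie_anticomm x (br X y)).
rewrite (linear_forN (lie_linearr y)) => /eqP.
by rewrite subr_eq0 subr_eq => /eqP.
Qed.

Lemma lie_sub (g : {vspace V}) : (forall x y, x \in g -> y \in g -> br x y \in g) ->
  is_lie_bracket (br_sub br g).
Proof.
move=> g_sub; have val_br u v : vsval (br_sub br g u v) = br (vsval u) (vsval v).
  by rewrite vsprojK ?g_sub ?subvsP.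
split=> [c x y z | c x y z | x | x y z]; apply: val_inj; rewrite /= ?val_br.
- by rewrite linearP (lie_linearl _).
- by rewrite linearP (lie_linearr _).
- by case: br_lie => _ _ ->.
- exact: lie_jacobi.
Qed.

End LieBracket.

Section Metric.
Variables (K : fieldType) (W : vectType K) (met : W -> W -> K).
Hypothesis met_metric : is_metric met.
Local Notation e := (vbasis (fullv : {vspace W})).

Lemma metC x y : met x y = met y x.
Proof. by case: met_metric. Qed.

Lemma met_scalarl z : scalar (met^~ z).
Proof. by case: met_metric => metl _ _ a x y; apply: metl. Qed.

Lemma met_scalarr z : scalar (met z).
Proof. by move=> a x y; rewrite !(metC z); apply: met_scalarl. Qed.

Lemma met_inj x y : (forall z, met x z = met y z) -> x = y.
Proof.
case: met_metric => _ _ nondeg xy; apply/eqP; rewrite -subr_eq0; apply/eqP/nondeg => z.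
by rewrite (linear_forB (met_scalarl z)) xy subrr.
Qed.

Lemma gram_unit : gram met \in unitmx.
Proof.
rewrite -row_free_unit -kermx_eq0; apply/eqP/row_matrixP => i; rewrite row0.
set v := row i _; have vG : v *m gram met = 0 by rewrite -row_mul mulmx_ker row0.
pose x := \sum_j v 0 j *: tnth e j.
have x_e j : met x (tnth e j) = 0.
  have := congr1 (fun M : 'rV_(\dim {:W}) => M 0 j) vG; rewrite !mxE => <-.
  rewrite (linear_for_sum (met_scalarl _)); apply: eq_bigr => k _.
  by rewrite (scalar_forZ (met_scalarl _)) /gram !mxE.
have x0 : x = 0.
  apply: met_inj => z; rewrite (linear_for0 (met_scalarl z)) (coord_vbasis_tnth (memvf z)).
  rewrite (linear_for_sum (met_scalarr x)) big1 // => j _.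
  by rewrite (scalar_forZ (met_scalarr x)) x_e mulr0.
apply/rowP => j; have := congr1 (coord e j) x0; rewrite linear0 /x.
under eq_bigr => k _ do rewrite (tnth_nth 0).
by rewrite coord_sum_free ?(basis_free (vbasisP _)) // => ->; rewrite mxE.
Qed.

(* [nabla br met x y] unfolds to [riesz (koszul br met x y)]. *)
Definition riesz (phi : W -> K) : W :=
  \sum_i ((\row_j phi (tnth e j)) *m invmx (gram met)) 0 i *: tnth e i.

Lemma rieszP phi : scalar phi -> forall z, met (riesz phi) z = phi z.
Proof.
move=> phi_scalar z; rewrite {1}(coord_vbasis_tnth (memvf z)).
rewrite [in RHS](coord_vbasis_tnth (memvf z)) (linear_for_sum (met_scalarr _)).
rewrite (linear_for_sum phi_scalar); apply: eq_bigr => j _.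
rewrite (scalar_forZ (met_scalarr _)) (scalar_forZ phi_scalar); congr (_ * _).
rewrite /riesz; set c := _ *m invmx _.
have <- : (c *m gram met) 0 j = phi (tnth e j) by rewrite mulmxKV ?gram_unit // mxE.
rewrite mxE (linear_for_sum (met_scalarl _)); apply: eq_bigr => i _.
by rewrite (scalar_forZ (met_scalarl _)) /gram !mxE.
Qed.

Definition dual_vbasis i := riesz (coord e i).

Lemma met_dual_vbasis i x : met (dual_vbasis i) x = coord e i x.
Proof. by rewrite rieszP // => a y z; rewrite linearP. Qed.

Lemma dual_vbasis_decomp x : x = \sum_i met (tnth e i) x *: dual_vbasis i.
Proof.
apply: met_inj => z; rewrite (linear_for_sum (met_scalarl z)) metC.
rewrite {1}(coord_vbasis_tnth (memvf z)) (linear_for_sum (met_scalarl x)).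
apply: eq_bigr => i _.
by rewrite (scalar_forZ (met_scalarl _)) (scalar_forZ (met_scalarl _)) met_dual_vbasis mulrC.
Qed.

Lemma vtrace_dual f : vtrace f = \sum_i met (dual_vbasis i) (f (tnth e i)).
Proof. by apply: eq_bigr => i _; rewrite met_dual_vbasis. Qed.

Lemma vtrace_dualr f : linear f -> vtrace f = \sum_i met (tnth e i) (f (dual_vbasis i)).
Proof.
move=> f_lin; apply: (vtrace_finite_rank (fun i => met_scalarr (tnth e i))) => x.
rewrite {1}(dual_vbasis_decomp x) (linear_for_sum f_lin).
by apply: eq_bigr => i _; rewrite (linear_forZ f_lin).
Qed.

Hypothesis two_neq0 : 2%:R != 0 :> K.

Lemma vtrace_skew_selfadjoint A S : linear A -> linear S ->
  (forall x y, met (A x) y = - met x (A y)) -> (forall x y, met (S x) y = met x (S y)) ->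
  vtrace (fun x => A (S x)) = 0.
Proof.
move=> A_lin S_lin A_skew S_sym.
have trN : vtrace (fun x => A (S x)) = - vtrace (fun x => A (S x)).
  rewrite {1}vtrace_dual (vtrace_compC A_lin S_lin) (vtrace_dualr (linear_comp S_lin A_lin)).
  rewrite -sumrN; apply: eq_bigr => i _.
  by rewrite metC A_skew S_sym metC.
have : vtrace (fun x => A (S x)) * 2%:R = 0 by rewrite mulr_natr mulr2n {1}trN addNr.
by move/eqP; rewrite mulf_eq0 (negPf two_neq0) orbF => /eqP.
Qed.

Variable br : W -> W -> W.
Hypothesis br_lie : is_lie_bracket br.
Local Notation nabla := (nabla br met).

Lemma koszul_scalar x y : scalar (koszul br met x y).
Proof.
move=> c u v; rewrite /koszul (lie_linearr br_lie y) (lie_linearl br_lie x).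
by rewrite (met_scalarr _) (met_scalarl x) (met_scalarl y); ring.
Qed.

Lemma nablaP x y z : met (nabla x y) z = koszul br met x y z.
Proof. exact: rieszP (koszul_scalar x y) z. Qed.

Lemma nabla_linearl y : linear (nabla^~ y).
Proof.
move=> c u v; apply: met_inj => z; rewrite (met_scalarl z) !nablaP /koszul.
rewrite (lie_linearl br_lie y) (lie_linearr br_lie z) (met_scalarl z) (met_scalarl y).
by rewrite (met_scalarr _); ring.
Qed.

Lemma nabla_linearr x : linear (nabla x).
Proof.
move=> c u v; apply: met_inj => z; rewrite (met_scalarl z) !nablaP /koszul.
rewrite (lie_linearr br_lie x) (lie_linearl br_lie z) (met_scalarl z) (met_scalarl x).
by rewrite (met_scalarr _); ring.
Qed.

Lemma nabla_skew v x y : met (nabla v x) y = - met x (nabla v y).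
Proof.
rewrite [met x _]metC !nablaP /koszul (lie_anticomm br_lie y x).
rewrite (lie_anticomm br_lie x v) (lie_anticomm br_lie y v) !(linear_forN (met_scalarl _)).
by ring.
Qed.

Lemma curv_linearl x y : linear (fun z => curv br met z x y).
Proof.
apply: linear_funB; first apply: linear_funB.
- exact: nabla_linearl.
- exact: linear_comp (nabla_linearr x) (nabla_linearl y).
- exact: linear_comp (nabla_linearl y) (lie_linearl br_lie x).
Qed.

Lemma sum_br_dual_vbasis : \sum_i br (dual_vbasis i) (tnth e i) = 0.
Proof.
pose S := \sum_i \sum_j met (dual_vbasis j) (dual_vbasis i) *: br (tnth e j) (tnth e i).
have -> : \sum_i br (dual_vbasis i) (tnth e i) = S.
  apply: eq_bigr => i _; rewrite {1}(coord_vbasis_tnth (memvf (dual_vbasis i))).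
  rewrite (linear_for_sum (lie_linearl br_lie _)); apply: eq_bigr => j _.
  by rewrite (linear_forZ (lie_linearl br_lie _)) met_dual_vbasis.
have SN : S = - S.
  rewrite {1}/S exchange_big -sumrN; apply: eq_bigr => i _; rewrite -sumrN.
  by apply: eq_bigr => j _; rewrite metC (lie_anticomm br_lie) scalerN.
have : 2%:R *: S == 0 by rewrite scaler_nat mulr2n {1}SN addNr.
by rewrite scaler_eq0 (negPf two_neq0) => /eqP.
Qed.

Lemma vtrace_nablal y : vtrace (nabla^~ y) = - vtrace (br y).
Proof.
rewrite vtrace_dual; under eq_bigr => i _ do rewrite metC nablaP /koszul.
rewrite -mulr_suml big_split /= sumrB.
have -> : \sum_i met (br (tnth e i) y) (dual_vbasis i) = - vtrace (br y).
  rewrite -vtraceN vtrace_dual; apply: eq_bigr => i _.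
  by rewrite metC (lie_anticomm br_lie _ y).
have -> : \sum_i met (br y (dual_vbasis i)) (tnth e i) = vtrace (br y).
  rewrite (vtrace_dualr (lie_linearr br_lie y)); apply: eq_bigr => i _.
  exact: metC.
rewrite -(linear_for_sum (met_scalarl y)) sum_br_dual_vbasis (linear_for0 (met_scalarl y)).
by field.
Qed.

End Metric.

Section NilpotentIdeal.
Variables (K : fieldType) (V : vectType K) (br : V -> V -> V) (g : {vspace V}).
Hypotheses (br_lie : is_lie_bracket br) (g_ideal : ideal_sub br g).
Hypothesis g_nil : nilpotent_sub br g.

(* The [j]-th term of the upper central series of [V] as a [g]-module. *)
Definition upper_central j x :=
  forall xs, size xs = j -> all (fun t => t \in g) xs -> foldr br x xs = 0.

Lemma foldr_lie_linear xs : linear (fun x => foldr br x xs).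
Proof. by elim: xs => [|y xs IH] c u v //=; rewrite IH (lie_linearr br_lie y). Qed.

Lemma upper_central_lower v j x :
  v \in g -> upper_central j.+1 x -> upper_central j (br v x).
Proof.
move=> vg xZ xs xs_size xs_g; rewrite -foldr_rcons; apply: xZ.
  by rewrite size_rcons xs_size.
by rewrite all_rcons vg.
Qed.

Lemma upper_central_br X j x : upper_central j x -> upper_central j (br X x).
Proof.
suff ad_X xs : forall x, all (fun t => t \in g) xs -> upper_central (size xs) x ->
    foldr br (br X x) xs = 0.
  by move=> xZ xs xs_size xs_g; apply: ad_X; rewrite ?xs_size.
elim/last_ind: xs => [|xs y IH] {}x /=.
  by move=> _ xZ; have /= -> := xZ [::] erefl erefl; rewrite (linear_for0 (lie_linearr br_lie X)).
rewrite all_rcons size_rcons => /andP [yg xs_g] xZ; rewrite foldr_rcons.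
have -> : br y (br X x) = br X (br y x) - br (br X y) x.
  by rewrite (lie_derivation br_lie X y x) [_ + br y _]addrC addrK.
rewrite (linear_forB (foldr_lie_linear xs)) IH //; last exact: upper_central_lower.
rewrite -foldr_rcons xZ ?subrr ?size_rcons //.
by rewrite all_rcons xs_g g_ideal.
Qed.

Lemma upper_central_full : exists k, forall x, upper_central k x.
Proof.
have [k kN] := g_nil; exists k.+1 => x xs; case/lastP: xs => [|xs y] //.
rewrite size_rcons all_rcons => -[xs_size] /andP [yg xs_g].
by rewrite foldr_rcons kN // (lie_anticomm br_lie) memvN g_ideal.
Qed.

Lemma vtrace_lowering f : linear f ->
  (forall j x, upper_central j.+1 x -> upper_central j (f x)) -> vtrace f = 0.
Proof.
move=> f_lin f_low; have [k kZ] := upper_central_full.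
apply: (vtrace_nilpotent (N := k) f_lin) => x.
suff iter_low j y : upper_central j y -> iter j f y = 0 by apply: iter_low.
elim: j y => [|j IH] y yZ; first exact: (yZ [::]).
by rewrite iterSr IH //; apply: f_low.
Qed.

Lemma vtrace_ad_nil v : v \in g -> vtrace (br v) = 0.
Proof.
move=> vg; apply: vtrace_lowering (lie_linearr br_lie v) _ => j x.
exact: upper_central_lower.
Qed.

Lemma vtrace_adad_nil X v : v \in g -> vtrace (fun z => br X (br v z)) = 0.
Proof.
move=> vg; apply: vtrace_lowering => [|j x xZ].
  exact: linear_comp (lie_linearr br_lie X) (lie_linearr br_lie v).
exact/upper_central_br/upper_central_lower.
Qed.

End NilpotentIdeal.

Section PseudoIwasawa.
Variables (K : fieldType) (V : vectType K) (br : V -> V -> V) (met : V -> V -> K).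
Variables (g a : {vspace V}) (H : V).
Hypotheses (two_neq0 : 2%:R != 0 :> K) (br_lie : is_lie_bracket br).
Hypotheses (met_metric : is_metric met) (iw : pseudo_iwasawa br met g a).
Hypothesis H_trace : forall v, met H v = vtrace (br v).

Local Notation br_g := (br_sub br g).
Local Notation met_g := (met_sub met g).
Local Notation pg := (daddv_pi g a).
Local Notation pa := (daddv_pi a g).

Let g_cap_a : (g :&: a = 0)%VS. Proof. by case: iw => -[]. Qed.
Let g_add_a : (g + a = fullv)%VS. Proof. by case: iw => -[]. Qed.
Let met_g_a x y : x \in g -> y \in a -> met x y = 0. Proof. by case: iw => _ + _ _ _; apply. Qed.
Let g_ideal : ideal_sub br g. Proof. by case: iw => _ _ []. Qed.
Let g_nil : nilpotent_sub br g. Proof. by case: iw => _ _ []. Qed.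
Let br_a_a X Y : X \in a -> Y \in a -> br X Y = 0. Proof. by case: iw => _ _ _ + _; apply. Qed.
Let ad_a_sym X u v : X \in a -> met (br X u) v = met u (br X v).
Proof. by case: iw => _ _ _ _; apply. Qed.

Lemma pg_add_pa x : pg x + pa x = x.
Proof. by rewrite daddv_pi_add // g_add_a memvf. Qed.

Lemma br_mem_g x y : br x y \in g.
Proof.
rewrite -(pg_add_pa x) (linear_forD (lie_linearl br_lie y)) memvD //.
  by rewrite (lie_anticomm br_lie) memvN g_ideal // memv_pi.
rewrite -(pg_add_pa y) (linear_forD (lie_linearr br_lie _)).
rewrite (br_a_a (memv_pi a g x) (memv_pi a g y)) addr0.
by rewrite g_ideal // memv_pi.
Qed.

Lemma met_pg x z : z \in g -> met x z = met (pg x) z.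
Proof.
move=> zg; rewrite -{1}(pg_add_pa x) (linear_forD (met_scalarl met_metric z)).
by rewrite [met (pa x) z](metC met_metric) (met_g_a zg (memv_pi _ _ _)) addr0.
Qed.

Lemma met_pa x Y : Y \in a -> met x Y = met (pa x) Y.
Proof.
move=> Ya; rewrite -{1}(pg_add_pa x) (linear_forD (met_scalarl met_metric Y)).
by rewrite (met_g_a (memv_pi _ _ _) Ya) add0r.
Qed.

Lemma koszul_a v w X : X \in a -> koszul br met v w X = met (br X v) w.
Proof.
move=> Xa; rewrite /koszul (met_g_a (br_mem_g v w) Xa) sub0r (lie_anticomm br_lie w X).
rewrite (linear_forN (met_scalarl met_metric v)) opprK (ad_a_sym w v Xa) [met w _](metC met_metric).
by field.
Qed.

Lemma nabla_a_l X y : X \in a -> nabla br met X y = 0.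
Proof.
move=> Xa; apply: (met_inj met_metric) => z.
rewrite (nablaP met_metric br_lie) (linear_for0 (met_scalarl met_metric z)) /koszul.
rewrite (met_g_a (br_mem_g y z) Xa) (lie_anticomm br_lie z X).
rewrite (linear_forN (met_scalarl met_metric y)) (ad_a_sym y z Xa) [met y _](metC met_metric).
by rewrite subr0 subrr mul0r.
Qed.

Lemma nabla_a_r u X : X \in a -> nabla br met u X = br u X.
Proof.
move=> Xa; apply: (met_inj met_metric) => z; rewrite (nablaP met_metric br_lie) /koszul.
rewrite (met_g_a (br_mem_g z u) Xa) addr0 (ad_a_sym z u Xa) (lie_anticomm br_lie X u).
rewrite (linear_forN (met_scalarr met_metric z)) opprK [met z _](metC met_metric).
by field.
Qed.

Lemma curv_a_l X v w : X \in a -> curv br met X v w = nabla br met (br v X) w.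
Proof.
move=> Xa; rewrite /curv !(nabla_a_l _ Xa) (linear_for0 (nabla_linearr met_metric br_lie v)).
rewrite subrr sub0r (lie_anticomm br_lie X v).
by rewrite (linear_forN (nabla_linearl met_metric br_lie w)) opprK.
Qed.

Lemma H_mem_a : H \in a.
Proof.
suff pgH0 : pg H = 0 by rewrite -(pg_add_pa H) pgH0 add0r memv_pi.
apply: (met_inj met_metric) => z; rewrite (linear_for0 (met_scalarl met_metric z)).
rewrite (metC met_metric) (met_pg z (memv_pi g a H)) (metC met_metric).
by rewrite -met_pg ?memv_pi // H_trace (vtrace_ad_nil br_lie g_ideal g_nil (memv_pi g a z)).
Qed.

Lemma met_H_pa_nabla v w : met H (pa (nabla br met v w)) = met (br H v) w.
Proof.
rewrite (metC met_metric) -met_pa ?H_mem_a //.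
by rewrite (nablaP met_metric br_lie) koszul_a // H_mem_a.
Qed.

Lemma met_g_metric : is_metric met_g.
Proof.
split=> [c x y z | x y | x x_orth]; rewrite /met_sub.
- by rewrite linearP (met_scalarl met_metric).
- exact: metC.
- apply: val_inj; apply: (met_inj met_metric) => z /=.
  rewrite (linear_for0 (met_scalarl met_metric z)) (metC met_metric).
  rewrite (met_pg z (subvsP x)) (metC met_metric) -(vsprojK (memv_pi g a z)).
  exact: x_orth.
Qed.

Let br_g_lie : is_lie_bracket br_g := lie_sub br_lie (fun x y _ _ => br_mem_g x y).

Let vsval_br_g u v : vsval (br_g u v) = br (vsval u) (vsval v).
Proof. exact: vsprojK (br_mem_g _ _). Qed.

Lemma pg_nabla u w : u \in g -> w \in g ->
  pg (nabla br met u w) = vsval (nabla br_g met_g (vsproj g u) (vsproj g w)).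
Proof.
move=> ug wg; rewrite -[LHS](vsprojK (memv_pi g a _)); congr vsval.
apply: (met_inj met_g_metric) => z.
rewrite (nablaP met_g_metric br_g_lie) /met_sub vsprojK ?memv_pi //.
rewrite -met_pg ?subvsP // (nablaP met_metric br_lie) /koszul /met_sub !vsval_br_g.
by rewrite !vsprojK.
Qed.

Lemma pg_nabla_nabla u v w : u \in g -> v \in g -> w \in g ->
  pg (nabla br met u (nabla br met v w)) =
  vsval (nabla br_g met_g (vsproj g u) (nabla br_g met_g (vsproj g v) (vsproj g w)))
  + br u (pa (nabla br met v w)).
Proof.
move=> ug vg wg; rewrite -{1}(pg_add_pa (nabla br met v w)).
rewrite (linear_forD (nabla_linearr met_metric br_lie u)) (nabla_a_r u (memv_pi a g _)).
rewrite linearD /= (daddv_pi_id g_cap_a (br_mem_g _ _)).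
by rewrite pg_nabla ?memv_pi // pg_nabla // vsvalK.
Qed.

Lemma pg_curv u v w : u \in g -> v \in g -> w \in g ->
  pg (curv br met u v w) =
  vsval (curv br_g met_g (vsproj g u) (vsproj g v) (vsproj g w))
  + br u (pa (nabla br met v w)) - br v (pa (nabla br met u w)).
Proof.
move=> ug vg wg; rewrite /curv !linearB /= !pg_nabla_nabla // pg_nabla ?br_mem_g //.
have -> : vsproj g (br u v) = br_g (vsproj g u) (vsproj g v).
  by apply: val_inj; rewrite /= vsval_br_g !vsprojK ?br_mem_g.
have regroup (A P B Q C : V) : A + P - (B + Q) - C = A - B - C + P - Q.
  by rewrite opprD addrACA (addrAC (A - B)) addrA.
exact: regroup.
Qed.

Lemma trace_on_g_adr Y : Y \in a -> trace_on g (fun u => br u Y) = - vtrace (br Y).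
Proof.
move=> Ya; rewrite (vtrace_daddv (lie_linearr br_lie Y) g_cap_a g_add_a).
rewrite [trace_on a _]big1 ?addr0 => [|i _]; last first.
  by rewrite br_a_a ?vbasis_tnth_mem // !linear0.
rewrite -trace_onN; apply: eq_trace_on => u _ /=.
by rewrite daddv_pi_id ?br_mem_g // (lie_anticomm br_lie).
Qed.

Lemma trace_on_g_pa_nabla v w : v \in g ->
  trace_on g (fun u => br v (pa (nabla br met u w)))
  = trace_on a (fun x => pa (nabla br met (br v x) w)).
Proof.
move=> vg; rewrite (@trace_on_finite_rank _ _ g _ _
  (fun i u => coord (vbasis a) i (pa (nabla br met u w))) (fun i => br v (tnth (vbasis a) i))) //.
- by move=> i c x y; rewrite (nabla_linearl met_metric br_lie w) !linearP.
- by move=> i; apply: br_mem_g.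
- move=> u _; rewrite {1}(coord_vbasis_tnth (memv_pi a g (nabla br met u w))).
  rewrite (linear_for_sum (lie_linearr br_lie v)); apply: eq_bigr => i _.
  by rewrite (linear_forZ (lie_linearr br_lie v)).
Qed.

Lemma ricci_gg v w : v \in g -> w \in g ->
  ricci br met v w = ricci br_g met_g (vsproj g v) (vsproj g w) - met (br H v) w.
Proof.
move=> vg wg; rewrite /ricci (vtrace_daddv (curv_linearl met_metric br_lie v w) g_cap_a g_add_a).
rewrite (vtrace_subvs (curv_linearl met_g_metric br_g_lie _ _)).
rewrite (@eq_trace_on _ _ g _ (fun u =>
    vsval (curv br_g met_g (vsproj g u) (vsproj g v) (vsproj g w))
    + br u (pa (nabla br met v w)) - br v (pa (nabla br met u w)))); last first.
  by move=> u ug; rewrite pg_curv.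
rewrite (@eq_trace_on _ _ a _ (fun x => pa (nabla br met (br v x) w))); last first.
  by move=> X Xa; rewrite curv_a_l.
rewrite trace_onB trace_onD trace_on_g_adr ?memv_pi // trace_on_g_pa_nabla //.
by rewrite -H_trace met_H_pa_nabla; ring.
Qed.

Lemma ricci_ga v X : v \in g -> X \in a -> ricci br met v X = 0.
Proof.
move=> vg Xa; rewrite /ricci.
rewrite (@eq_vtrace _ _ _ (fun z =>
  nabla br met z (br v X) - nabla br met v (br z X) - br (br z v) X)); last first.
  by move=> z /=; rewrite /curv !(nabla_a_r _ Xa).
rewrite !vtraceB (vtrace_nablal met_metric two_neq0 br_lie).
rewrite (vtrace_ad_nil br_lie g_ideal g_nil (br_mem_g v X)) oppr0 sub0r.
have -> : vtrace (fun z => nabla br met v (br z X)) = 0.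
  apply: (vtrace_skew_selfadjoint met_metric two_neq0 (nabla_linearr met_metric br_lie v)
    (lie_linearl br_lie X)); first exact: nabla_skew.
  move=> x y; rewrite !(lie_anticomm br_lie _ X) (linear_forN (met_scalarl met_metric y)).
  by rewrite (linear_forN (met_scalarr met_metric x)) ad_a_sym.
rewrite (@eq_vtrace _ _ _ (fun z => br X (br v z))); last first.
  move=> z; rewrite (lie_anticomm br_lie _ X) (lie_anticomm br_lie z).
  by rewrite (linear_forN (lie_linearr br_lie X)) opprK.
by rewrite (vtrace_adad_nil br_lie g_ideal g_nil X vg) oppr0 addr0.
Qed.

Lemma ricci_aa X Y : X \in a -> Y \in a ->
  ricci br met X Y = - vtrace (fun z => br X (br Y z)).
Proof.
move=> Xa Ya; rewrite /ricci -vtraceN; apply: eq_vtrace => z.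
rewrite /curv !(nabla_a_l _ Xa) (linear_for0 (nabla_linearr met_metric br_lie z)).
rewrite (nabla_a_r _ Ya) subrr sub0r; congr (- _).
rewrite (lie_derivation br_lie) (br_a_a Xa Ya) (linear_for0 (lie_linearl br_lie z)) add0r.
rewrite (lie_anticomm br_lie Y) (lie_anticomm br_lie X z).
by rewrite (linear_forN (lie_linearl br_lie Y)) opprK.
Qed.

End PseudoIwasawa.

Theorem lemma3p8 (R : realType) (V : vectType R) (br : V -> V -> V)
  (met : V -> V -> R) (g a : {vspace V}) (H : V) :
  is_lie_bracket br -> is_metric met -> pseudo_iwasawa br met g a ->
  (forall v, met H v = vtrace (br v)) ->
  [/\ (forall v w, v \in g -> w \in g ->
         ricci br met v w =
         ricci (br_sub br g) (met_sub met g) (vsproj g v) (vsproj g w)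
         - met (br H v) w),
      (forall v X, v \in g -> X \in a -> ricci br met v X = 0) &
      (forall X Y, X \in a -> Y \in a ->
         ricci br met X Y = - vtrace (fun z => br X (br Y z)))].
Proof.
move=> br_lie met_metric iw H_trace.
have two_neq0 : 2%:R != 0 :> R by rewrite pnatr_eq0.
split=> [v w | v X | X Y].
- exact: (ricci_gg two_neq0 br_lie met_metric iw H_trace).
- exact: (ricci_ga two_neq0 br_lie met_metric iw).
- exact: (ricci_aa two_neq0 br_lie met_metric iw).
Qed.
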